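(* Let $F$ be a $4$-regular graph, let $D$ be a directed version of $F$, let $\mathbf o$ be a transitional orientation of $F$, and let $\Gamma$ be a cycle spanning set of $F-E$, where $E\subseteq E(F)$ contains at most one edge from each connected component of $F$. Then $\mathrm{CM}(F,\Gamma,D)\cdot\Delta_{D,\mathbf o}$ is a representation of $Q(F)$. This representation is strict when $|E|=c(F)$.
   Context: Graphs: $G=(V,H,E,\epsilon)$ with finite sets of vertices $V$ and half-edges $H$, a partition $E$ of $H$ into unordered pairs (edges), and $\epsilon:H\to V$; loops and multiple edges allowed. $c(G)$ is the number of connected components; $G-E'$ deletes the edges of $E'$. A directed version orders each edge as (tail, head). A single transition is an unordered pair of distinct half-edges incident with a common vertex; a directed single transition is such an ordered pair. A closed walk is a sequence $((h_1,h_2),\dots,(h_{n-1},h_n))$ of directed single transitions with $\{h_2,h_3\},\{h_4,h_5\},\dots,\{h_n,h_1\}$ edges, up to cyclic shift. $\sigma(D,W)\in\mathbb Z^{E}$ counts, at each edge, traversals by $W$ along its direction in $D$ minus traversals against it. A circuit is a nonempty closed walk using each half-edge at most once, with orientation forgotten. The cycle space of $D$ is the right null space over $\mathbb Q$ of its vertex-edge incidence matrix. A cycle basis is a set $B$ of closed walks such that the $\sigma(D,W)$, $W\in B$, are pairwise distinct and form a basis of the cycle space; a cycle spanning set is a set of closed walks containing a cycle basis. $\mathrm{CM}(G,\Gamma,D)$ is the $\Gamma\times E(G)$ matrix with row $\sigma(D,W)$ for $W\in\Gamma$. $F$ is $4$-regular if every vertex is incident with exactly $4$ half-edges. A transition at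 $v$ is a partition of the four half-edges at $v$ into two single transitions; $\mathfrak T(F)$ is the set of transitions. A circuit partition $P$ is a set of circuits such that every half-edge lies in exactly one single transition of exactly one circuit of $P$; $\tau(P)$ is the set of transitions both of whose single transitions occur in circuits of $P$; each set containing exactly one transition at every vertex equals $\tau(P)$ for a unique $P$. A transitional orientation $\mathbf o$ assigns to each transition $t$ one of its two single transitions $\mathbf o(t)$. $\Delta_{D,\mathbf o}$ is the $E(F)\times\mathfrak T(F)$ matrix over $\mathbb Q$ whose $(e,t)$ entry is $1$ if $e\cap\mathbf o(t)=\{h\}$ with $h$ the tail of $e$ in $D$, $-1$ if $e\cap\mathbf o(t)=\{h\}$ with $h$ the head, and $0$ otherwise. Multimatroids: for a partition $\Omega$ of a finite set $U$ (skew classes), a transversal meets every skew class in exactly one element; a subtransversal is a subset of a transversal. A multimatroid $(U,\Omega,r)$ has $r$ from subtransversals to $\mathbb N$ such that on each subtransversal $S$, $r$ is a matroid rank function, and for $x\ne y$ in a skew class disjoint from $S$, $\max\{r(S\cup\{x\}),r(S\cup\{y\})\}>r(S)$. A representation is a matrix with columns indexed by $U$ such that the rank of the columns in any subtransversal $S$ equals $r(S)$; it is strict if the matrix rank equals $\max r$. The Eulerian $3$-matroid $Q(F)$ is the unique multimatroid $(\mathfrak T(F),\Omega,r)$ whose skew classes are the sets of three transitions at each vertex and such that for every transversal $T=\tau(P)$, $r(T)=|V(F)|-(|P|-c(F))$. *)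

From HB Require Import structures.
From mathcomp Require Import all_boot all_order all_algebra.
Set Implicit Arguments. Unset Strict Implicit. Unset Printing Implicit Defensive.
Import GRing.Theory Num.Theory.

(* A graph G = (V, H, E, eps): finite vertex set gV, finite half-edge set gH,
   the partition E of gH into unordered pairs is encoded by the fixed-point
   free involution [mate] (the edges are the pairs {h, mate h}). *)
Record graph := Graph {
  gV : finType;
  gH : finType;
  mate : gH -> gH;
  eps : gH -> gV;
  mate_invol : involutive mate;
  mate_nofix : forall h, mate h != h }.

Section GraphDefs.
Variable G : graph.
Local Notation V := (gV G).
Local Notation H := (gH G).
Local Open Scope ring_scope.

Definition adj : rel V := fun u v => [exists h : H, (eps h == u) && (eps (mate h) == v)].
Definition ncomp : nat := #|[set [set w | connect adj v w] | v : V]|.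

Definition four_regular : Prop := forall v : V, #|[set h : H | eps h == v]| = 4.

Definition edge_set : {set {set H}} := [set [set h; mate h] | h : H].
Definition edge := {e : {set H} | e \in edge_set}.

(* a directed version: tl h = true iff h is the tail of its edge *)
Definition directed (tl : H -> bool) : Prop := forall h, tl (mate h) = ~~ tl h.

(* closed walks: a nonempty sequence of directed single transitions
   (h1,h2),...,(h_{n-1},h_n) with {h2,h3},...,{hn,h1} edges *)
Definition walk := seq (H * H).
Definition single_ok (p : H * H) : bool := (p.1 != p.2) && (eps p.1 == eps p.2).
Definition closed_walk (w : walk) : bool :=
  [&& w != [::], all single_ok w & cycle (fun p q : H * H => q.1 == mate p.2) w].

(* closed walk of G - E' : uses no half-edge of a deleted edge *)
Definition avoids (E' : {set edge}) (w : walk) : bool :=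
  all (fun p : H * H => [forall e in E', (p.1 \notin val e) && (p.2 \notin val e)]) w.

(* sigma(D,W) : traversal of edge {b_j, a_{j+1}} = {b_j, mate b_j} from b_j *)
Definition sigma (tl : H -> bool) (w : walk) (e : edge) : rat :=
  (\sum_(p <- w | p.2 \in val e) (if tl p.2 then 1 else -1))%R.

(* vertex-edge incidence matrix of D (loops give 0) *)
Definition inc (tl : H -> bool) (v : V) (e : edge) : rat :=
  (\sum_(h in val e | eps h == v) (if tl h then 1 else -1))%R.

(* the cycle space of D - E', with vectors of Q^{E(G) \ E'} extended by 0 on E' *)
Definition cycvec (tl : H -> bool) (E' : {set edge}) (x : edge -> rat) : Prop :=
  (forall e, e \in E' -> x e = 0%R) /\
  (forall v : V, (\sum_(e in [set e | e \notin E']) inc tl v e * x e)%R = 0%R).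

Definition rowv (x : edge -> rat) : 'rV[rat]_#|{: edge}| := \row_k x (enum_val k).

Definition cycle_basis (tl : H -> bool) (E' : {set edge}) (I : finType)
    (w : I -> walk) (B : {set I}) : Prop :=
  (forall i, i \in B -> closed_walk (w i) && avoids E' (w i)) /\
  (forall i j, i \in B -> j \in B -> i != j ->
      rowv (sigma tl (w i)) <> rowv (sigma tl (w j))) /\
  (forall i, i \in B -> cycvec tl E' (sigma tl (w i))) /\
  row_free (\matrix_(k < #|B|) rowv (sigma tl (w (enum_val k)))) /\
  (forall x, cycvec tl E' x ->
      (rowv x <= \matrix_(k < #|B|) rowv (sigma tl (w (enum_val k))))%MS).

(* Gamma = {w i | i in I} is a cycle spanning set of D - E' (a set of closed
   walks, each considered up to cyclic shift) *)
Definition cycle_spanning_set (tl : H -> bool) (E' : {set edge}) (I : finType)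
    (w : I -> walk) : Prop :=
  (forall i, closed_walk (w i) && avoids E' (w i)) /\
  (forall i j, i != j -> forall k, w j != rot k (w i)) /\
  (exists B : {set I}, cycle_basis tl E' w B).

Definition is_trans (P : {set {set H}}) : bool :=
  [exists v : V, partition P [set h | eps h == v] && [forall B in P, #|B| == 2]].
Definition trans := {P : {set {set H}} | is_trans P}.
Definition trans_at (v : V) (t : trans) : bool := cover (val t) == [set h | eps h == v].

Definition trans_orientation (o : trans -> {set H}) : Prop := forall t, o t \in val t.

Definition Delta (tl : H -> bool) (o : trans -> {set H}) (e : edge) (t : trans) : rat :=
  if #|val e :&: o t| == 1%N then
    (\sum_(h in val e :&: o t) (if tl h then 1 else -1))%R
  else 0%R.

Definition halfedges (w : walk) : seq H := flatten [seq [:: p.1; p.2] | p <- w].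
Definition circuit (w : walk) : bool := closed_walk w && uniq (halfedges w).
Definition circuit_partition (ps : seq walk) : Prop :=
  all circuit ps /\
  forall h : H, (\sum_(w <- ps) count (fun p : H * H => (p.1 == h) || (p.2 == h)) w = 1)%N.
Definition tau (ps : seq walk) : {set trans} :=
  [set t : trans | [forall B in val t,
      has (fun w : walk => has (fun p : H * H => [set p.1; p.2] == B) w) ps]].

(* multimatroids with ground set trans and skew classes {t | trans_at v t} *)
Definition subtransversal (S : {set trans}) : bool :=
  [forall v : V, (#|[set t in S | trans_at v t]| <= 1)%N].

Definition multimatroid (r : {set trans} -> nat) : Prop :=
  (forall S, subtransversal S -> forall X Y : {set trans}, X \subset S -> Y \subset S ->
     [/\ (r X <= #|X|)%N, (X \subset Y -> (r X <= r Y)%N) & (r (X :|: Y) + r (X :&: Y) <= r X + r Y)%N])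
  /\
  (forall S (v : V) (x y : trans), subtransversal S ->
     (forall t, t \in S -> ~~ trans_at v t) -> trans_at v x -> trans_at v y -> x != y ->
     (r S < maxn (r (x |: S)) (r (y |: S)))%N).

(* r is (the rank function of) the Eulerian 3-matroid Q(G):
   r(tau(P)) = |V| - (|P| - c(G)) for every circuit partition P *)
Definition is_Q (r : {set trans} -> nat) : Prop :=
  multimatroid r /\
  forall ps, circuit_partition ps -> (r (tau ps) + size ps = #|V| + ncomp)%N.

Definition colv (I : finType) (M : I -> trans -> rat) (t : trans) : 'rV[rat]_#|{: I}| :=
  \row_k M (enum_val k) t.
Definition crank (I : finType) (M : I -> trans -> rat) (S : {set trans}) : nat :=
  \rank (\matrix_(k < #|S|) colv M (enum_val k)).
Definition represents (I : finType) (M : I -> trans -> rat) (r : {set trans} -> nat) : Prop :=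
  forall S, subtransversal S -> crank M S = r S.
Definition strict_rep (I : finType) (M : I -> trans -> rat) (r : {set trans} -> nat) : Prop :=
  crank M setT = (\max_(S : {set trans} | subtransversal S) r S)%N.

Definition CMDelta (tl : H -> bool) (o : trans -> {set H}) (I : finType) (w : I -> walk)
    (i : I) (t : trans) : rat :=
  (\sum_(e : edge) sigma tl (w i) e * Delta tl o e t)%R.

End GraphDefs.

From HB Require Import structures.
From mathcomp Require Import all_boot all_order all_algebra.
From mathcomp Require Import zify ring lra.
Set Implicit Arguments. Unset Strict Implicit. Unset Printing Implicit Defensive.
Import GRing.Theory.

(* Let Z be the cycle space of F - E.  A vector x of Z lies in the kernel of
   the columns of CM * Delta indexed by S iff the flow of x through o(t)
   vanishes for every t in S.  For a transversal tau(P) these x are exactly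
   the combinations of the circuits of P that avoid E, which are independent;
   every other circuit of P contains exactly one edge of E, so the column rank
   of tau(P) is dim Z - |P| + |E|, and it differs from r(tau(P)) by the
   constant dim Z + |E| - |V| - c(F).  At an uncovered vertex of a
   subtransversal some transition raises the column rank by one, and some
   transition raises r by one (second multimatroid axiom).  Completing the
   empty set greedily in both ways shows that the constant is 0, and induction
   on the number of uncovered vertices gives rank = r on all subtransversals.
   When |E| = c(F) this also yields dim Z = |V| = max r. *)

Lemma sum_nat_eq (S : finType) (P : pred S) (a : S) : (\sum_(s | P s) (a == s) = P a)%N.
Proof.
case: (boolP (P a)) => Pa.
  by rewrite (bigD1 a) //= eqxx big1 // => s /andP[_ /negbTE]; rewrite eq_sym => ->.
by rewrite big1 // => s Ps; case: eqP => // eq_as; rewrite eq_as Ps in Pa.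
Qed.

Lemma sum_count_eq (T : Type) (S : finType) (r : seq T) (f : T -> S) (P : pred S) :
  (\sum_(s | P s) count (fun x => f x == s) r = count (fun x => P (f x)) r)%N.
Proof.
elim: r => [|x r IH] /=; first by rewrite big1.
by rewrite big_split /= IH sum_nat_eq.
Qed.

Lemma sum_set2 (T : finType) (V : nmodType) (f : T -> V) a b : a != b ->
  (\sum_(h in [set a; b]) f h = f a + f b)%R.
Proof. by move=> ab; rewrite big_setU1 ?big_set1 // inE. Qed.

Section EdgeFlows.
Variables (F : graph) (tl : gH F -> bool).
Hypothesis tl_dir : directed tl.
Local Notation V := (gV F).
Local Notation H := (gH F).
Local Open Scope ring_scope.

Lemma edge_set_pair (h : H) : [set h; mate h] \in edge_set F.
Proof. by apply/imsetP; exists h. Qed.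

Definition edge_of (h : H) : edge F := exist (fun e => e \in edge_set F) _ (edge_set_pair h).

Lemma edge_of_mate h : edge_of (mate h) = edge_of h.
Proof. by apply: val_inj; rewrite /= mate_invol setUC. Qed.

Lemma edge_of_onto (e : edge F) : exists h, e = edge_of h.
Proof. by case: e => e /[dup] /imsetP [h _ ->] he; exists h; apply: val_inj. Qed.

Lemma in_edge (h : H) (e : edge F) : (h \in val e) = (e == edge_of h).
Proof.
apply/idP/eqP => [|->]; last by rewrite !inE eqxx.
by have [h0 ->] := edge_of_onto e; rewrite !inE => /orP[] /eqP ->; rewrite ?edge_of_mate.
Qed.

Lemma sum_edges_halfedges (P : pred H) (G : edge F -> H -> rat) :
  \sum_(e : edge F) \sum_(h in val e | P h) G e h = \sum_(h | P h) G (edge_of h) h.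
Proof.
rewrite (exchange_big_dep P) /=; last by move=> e h _ /andP[].
apply: eq_bigr => h Ph; rewrite (big_pred1 (edge_of h)) // => e /=.
by rewrite -in_edge Ph andbT.
Qed.

Definition hsign (h : H) : rat := if tl h then 1 else -1.

Lemma hsign_mate h : hsign (mate h) = - hsign h.
Proof. by rewrite /hsign tl_dir; case: (tl h); rewrite ?opprK. Qed.

Lemma hsign_sqr h : hsign h * hsign h = 1.
Proof. by rewrite /hsign; case: (tl h); rewrite ?mulrNN mulr1. Qed.

Lemma sum_hsign_edge (e : edge F) : \sum_(h in val e) hsign h = 0.
Proof.
have [h ->] := edge_of_onto e; rewrite big_setU1 /= ?inE 1?eq_sym ?mate_nofix //.
by rewrite big_set1 hsign_mate addrN.
Qed.

Definition outflow (x : edge F -> rat) (h : H) : rat := hsign h * x (edge_of h).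

Lemma outflow_mate x h : outflow x (mate h) = - outflow x h.
Proof. by rewrite /outflow hsign_mate edge_of_mate mulNr. Qed.

Lemma edge_outflow x h : x (edge_of h) = hsign h * outflow x h.
Proof. by rewrite /outflow mulrA hsign_sqr mul1r. Qed.

Definition netflow (v : V) (x : edge F -> rat) : rat := \sum_(h | eps h == v) outflow x h.

Lemma inc_netflow v x : \sum_(e : edge F) inc tl v e * x e = netflow v x.
Proof.
under eq_bigr do rewrite mulr_suml.
by rewrite (sum_edges_halfedges (fun h => eps h == v) (fun e h => _ * x e)); apply: eq_bigr.
Qed.

Lemma cycvecP (E : {set edge F}) x :
  cycvec tl E x <-> (forall e, e \in E -> x e = 0) /\ (forall v, netflow v x = 0).
Proof.
have sumE v : (forall e, e \in E -> x e = 0) ->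
    \sum_(e in [set e | e \notin E]) inc tl v e * x e = netflow v x.
  move=> xE; rewrite -inc_netflow [RHS](bigID (mem E)) /= [X in _ = X + _]big1 ?add0r.
    by apply: eq_bigl => e; rewrite inE.
  by move=> e /xE ->; rewrite mulr0.
by split=> -[xE xv]; split=> // v; rewrite ?sumE // -sumE.
Qed.

Definition lincomb (a : rat) (x : edge F -> rat) (b : rat) (y : edge F -> rat) :=
  fun e => a * x e + b * y e.

Lemma outflow_lincomb a x b y h :
  outflow (lincomb a x b y) h = a * outflow x h + b * outflow y h.
Proof. by rewrite /outflow /lincomb; ring. Qed.

Lemma netflow_lincomb v a x b y :
  netflow v (lincomb a x b y) = a * netflow v x + b * netflow v y.
Proof.
by rewrite /netflow; under eq_bigr do rewrite outflow_lincomb; rewrite big_split -!mulr_sumr.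
Qed.

Section TransitionFlow.
Variable o : trans F -> {set H}.

Lemma Delta_hsign e t : Delta tl o e t = \sum_(h in val e :&: o t) hsign h.
Proof.
rewrite /Delta; case: ifP => // /negbT ne1.
have [h Eh] := edge_of_onto e.
have ce : #|val e| = 2%N by rewrite Eh /= cards2 eq_sym mate_nofix.
have : (#|val e :&: o t| <= 2)%N by rewrite -ce subset_leq_card ?subsetIl.
case: (posnP #|val e :&: o t|) => [/eqP|c0 c2].
  by rewrite cards_eq0 => /eqP ->; rewrite big_set0.
have -> : val e :&: o t = val e.
  by apply/eqP; rewrite eqEcard subsetIl ce; move: ne1 c0 c2; case: #|_| => [|[|[|]]].
by rewrite sum_hsign_edge.
Qed.

(* Column [t] of [x * Delta]: the flow of [x] through [o t]. *)
Definition tflow (t : trans F) (x : edge F -> rat) : rat :=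
  \sum_(e : edge F) x e * Delta tl o e t.

Lemma tflowE t x : tflow t x = \sum_(h in o t) outflow x h.
Proof.
rewrite /tflow; under eq_bigr do rewrite Delta_hsign mulr_sumr.
transitivity (\sum_(e : edge F) \sum_(h in val e | h \in o t) x e * hsign h).
  by apply: eq_bigr => e _; apply: eq_bigl => h; rewrite inE.
rewrite (sum_edges_halfedges (mem (o t)) (fun e h => x e * hsign h)).
by apply: eq_bigr => h _; rewrite mulrC.
Qed.

Lemma tflow_lincomb t a x b y : tflow t (lincomb a x b y) = a * tflow t x + b * tflow t y.
Proof.
by rewrite !tflowE; under eq_bigr do rewrite outflow_lincomb; rewrite big_split -!mulr_sumr.
Qed.

End TransitionFlow.

Lemma closed_walk_count_mate (w : walk F) (h : H) : closed_walk w ->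
  count (fun p => p.2 == mate h) w = count (fun p => p.1 == h) w.
Proof.
case: w => [|p0 w] // /and3P[_ _ cw].
have fst_path p s : path (fun p q : H * H => q.1 == mate p.2) p s ->
    map fst s = map (fun q => mate q.2) (belast p s).
  by elim: s p => [|q s IH] p //= /andP[/eqP -> /IH ->].
have := fst_path _ _ cw; rewrite belast_rcons => fstE.
transitivity (count (pred1 h) (map (fun q => mate q.2) (p0 :: w))).
  by rewrite count_map; apply: eq_count => p /=; rewrite (canF_eq (@mate_invol F)).
by rewrite -fstE count_map -cats1 count_cat /= addn0 addnC.
Qed.

Lemma outflow_sigma (w : walk F) h : closed_walk w ->
  outflow (sigma tl w) h = (count (fun p => p.2 == h) w)%:R - (count (fun p => p.1 == h) w)%:R.
Proof.
move=> cw; rewrite -(closed_walk_count_mate h cw).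
have sum_at a : \sum_(p <- w | p.2 == a) hsign p.2 = (count (fun p => p.2 == a) w)%:R * hsign a.
  rewrite (eq_bigr (fun=> hsign a)) => [|p /eqP ->] //.
  by rewrite big_const_seq iter_addr_0 mulr_natl.
have sigma_split : sigma tl w (edge_of h) =
    \sum_(p <- w | p.2 == h) hsign p.2 + \sum_(p <- w | p.2 == mate h) hsign p.2.
  rewrite /sigma (bigID (fun p => p.2 == h)) /=; congr (_ + _); apply: eq_bigl => p; rewrite !inE.
    by case: (_ == h); rewrite ?andbF.
  by case: (eqVneq p.2 h) => [->|_] /=; rewrite ?andbT // eq_sym (negbTE (mate_nofix h)).
rewrite /outflow sigma_split !sum_at hsign_mate.
set c1 := _%:R; set c2 := _%:R.
transitivity ((c1 - c2) * (hsign h * hsign h)); first by ring.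
by rewrite hsign_sqr mulr1.
Qed.

Lemma netflow_sigma v (w : walk F) : closed_walk w -> netflow v (sigma tl w) = 0.
Proof.
move=> cw; rewrite /netflow; under eq_bigr do rewrite outflow_sigma //.
rewrite sumrB -!natr_sum !sum_count_eq.
suff -> : count (fun p : H * H => eps p.2 == v) w = count (fun p => eps p.1 == v) w.
  by rewrite subrr.
case/and3P: cw => _ /allP single _; apply: eq_in_count => p /single.
by case/andP=> _ /eqP ->.
Qed.

Lemma sigma_avoids (E : {set edge F}) (w : walk F) e : avoids E w -> e \in E -> sigma tl w e = 0.
Proof.
move=> /allP avw eE; rewrite /sigma big1_seq // => p /andP[pe pw].
by have /forallP/(_ e) := avw p pw; rewrite eE pe andbF.
Qed.

Lemma cycvec_sigma (E : {set edge F}) (w : walk F) :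
  closed_walk w -> avoids E w -> cycvec tl E (sigma tl w).
Proof.
by move=> cw avw; apply/cycvecP; split=> [e|v]; [apply: sigma_avoids | apply: netflow_sigma].
Qed.

End EdgeFlows.

Section Transitions.
Variable F : graph.
Hypothesis F4 : four_regular F.
Local Notation V := (gV F).
Local Notation H := (gH F).

Definition star (v : V) : {set H} := [set h | eps h == v].

Lemma in_star v h : (h \in star v) = (eps h == v).
Proof. by rewrite inE. Qed.

Lemma card_star v : #|star v| = 4.
Proof. exact: F4. Qed.

Lemma star_inj : injective star.
Proof.
move=> v u star_vu; have /card_gt0P[h hv] : 0 < #|star v| by rewrite card_star.
by move: (hv); rewrite star_vu !inE => /eqP <-; move: hv; rewrite inE => /eqP.
Qed.

Lemma trans_atP (t : trans F) v : trans_at v t ->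
  partition (val t) (star v) /\ forall B, B \in val t -> #|B| = 2.
Proof.
move=> /eqP cover_t; have /existsP[u /andP[part_t /forallP card_t]] := valP t.
have <- : u = v by apply: star_inj; rewrite /star -cover_t; case/and3P: part_t => /eqP.
by split=> // B Bt; apply/eqP/(implyP (card_t B)).
Qed.

Lemma trans_vertex (t : trans F) : exists v, trans_at v t.
Proof. by have /existsP[v /andP[/and3P[cover_t _ _] _]] := valP t; exists v. Qed.

Lemma trans_at_uniq (t : trans F) v u : trans_at v t -> trans_at u t -> v = u.
Proof. by move=> /eqP tv /eqP tu; apply: star_inj; rewrite /star -tv -tu. Qed.

Section TransitionAt.
Variables (v : V) (t : trans F).
Hypothesis tv : trans_at v t.

Lemma trans_block_sub B : B \in val t -> B \subset star v.
Proof.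
by move=> Bt; have [/and3P[/eqP <- _ _] _] := trans_atP tv; apply: bigcup_sup.
Qed.

Lemma trans_block_card_compl B : B \in val t -> #|star v :\: B| = 2.
Proof.
move=> Bt; have [_ card_t] := trans_atP tv.
by rewrite cardsD card_star (setIidPr (trans_block_sub Bt)) card_t.
Qed.

Lemma trans_blockE B B' : B \in val t -> B' \in val t -> B' = B \/ B' = star v :\: B.
Proof.
move=> Bt B't; have [/and3P[_ triv_t _] card_t] := trans_atP tv.
have [->|neq] := eqVneq B' B; [by left | right].
have dis : [disjoint B' & B] by move/trivIsetP: triv_t; apply.
apply/eqP; rewrite eqEcard trans_block_card_compl // card_t // leqnn andbT.
by rewrite subsetD dis trans_block_sub.
Qed.

Lemma trans_valE B : B \in val t -> val t = [set B; star v :\: B].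
Proof.
move=> Bt; have [/and3P[/eqP cover_t _ _] _] := trans_atP tv.
have /card_gt0P[h] : 0 < #|star v :\: B| by rewrite trans_block_card_compl.
rewrite inE => /andP[hB hv]; rewrite -cover_t in hv.
have hB' := mem_pblock (val t) h; rewrite hv in hB'.
have compl_t : star v :\: B \in val t.
  case: (trans_blockE Bt (pblock_mem hv)) => [pB|<-]; last exact: pblock_mem.
  by rewrite -pB hB' in hB.
apply/setP => B'; rewrite !inE; apply/idP/idP.
  by case/(trans_blockE Bt) => ->; rewrite eqxx ?orbT.
by case/orP => /eqP ->.
Qed.

Definition partner (y : H) : H := odflt y [pick z in pblock (val t) y :\ y].

Lemma partner_eq y z : [set y; z] \in val t -> y != z -> partner y = z.
Proof.
move=> yz_t yz; have [/and3P[_ triv_t _] _] := trans_atP tv.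
rewrite /partner (def_pblock triv_t yz_t) ?set21 //.
case: pickP => [z' /=|none]; last by move: (none z); rewrite !inE eqxx orbT eq_sym yz.
by rewrite !inE => /andP[z'y /orP[/eqP z'y'|/eqP ->]] //; rewrite z'y' eqxx in z'y.
Qed.

Lemma partnerP y : eps y = v ->
  [/\ partner y != y, eps (partner y) = v, [set y; partner y] \in val t
    & partner (partner y) = y].
Proof.
move=> yv; have [/and3P[/eqP cover_t _ _] card_t] := trans_atP tv.
have yt : y \in cover (val t) by rewrite cover_t inE yv.
have [z [yz yz_t]] : exists z, y != z /\ [set y; z] \in val t.
  have /eqP/cards2P[a [b [ab pyE]]] := card_t _ (pblock_mem yt).
  have := pblock_mem yt; have := mem_pblock (val t) y.
  rewrite yt pyE !inE => /orP[] /eqP ->; first by exists b.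
  by rewrite setUC; exists a; rewrite eq_sym.
have zy_t : [set z; y] \in val t by rewrite setUC.
rewrite (partner_eq yz_t yz) (partner_eq zy_t) 1?eq_sym //; split=> //.
by have /subsetP/(_ z) := trans_block_sub yz_t; rewrite !inE eqxx orbT => /(_ isT)/eqP.
Qed.

End TransitionAt.

Lemma eq_trans_block (t t' : trans F) v B :
  trans_at v t -> trans_at v t' -> B \in val t -> B \in val t' -> t = t'.
Proof.
by move=> tv t'v Bt Bt'; apply: val_inj; rewrite (trans_valE tv Bt) (trans_valE t'v Bt').
Qed.

Lemma trans_of_pair v y y' : eps y = v -> eps y' = v -> y != y' ->
  exists t : trans F, trans_at v t /\ [set y; y'] \in val t.
Proof.
move=> yv y'v yy'; set B := [set y; y']; set C := star v :\: B.
have Bv : B \subset star v by apply/subsetP => h; rewrite !inE => /orP[] /eqP ->; rewrite ?yv ?y'v.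
have cardB : #|B| = 2 by rewrite cards2 yy'.
have cardC : #|C| = 2 by rewrite cardsD card_star (setIidPr Bv) cardB.
have partC : partition [set C] C.
  by rewrite /partition cover1 trivIset1 eqxx inE eq_sym -cards_eq0 cardC.
have disBC : [disjoint B & C].
  by rewrite disjoint_subset; apply/subsetP => h hB; rewrite inE in_setD hB.
have B0 : B != set0 by rewrite -cards_eq0 cardB.
have := partitionU1 partC B0 disBC; rewrite -{2}(setIidPr Bv) setID => partP.
have transP : is_trans [set B; C].
  apply/existsP; exists v; rewrite partP; apply/forallP => D; apply/implyP.
  by rewrite !inE => /orP[] /eqP ->; rewrite ?cardB ?cardC.
exists (exist (fun P => is_trans P) _ transP); split; last by rewrite /= !inE eqxx.
by rewrite /trans_at (cover_partition partP).
Qed.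

Lemma trans_at_exists v : exists t : trans F, trans_at v t.
Proof.
have /card_gt1P[y [y' [yv y'v yy']]] : 1 < #|star v| by rewrite card_star.
rewrite !inE in yv y'v.
by have [t [tv _]] := trans_of_pair (eqP yv) (eqP y'v) yy'; exists t.
Qed.

Lemma trans_at_other v (t : trans F) : trans_at v t -> exists t', trans_at v t' /\ t' != t.
Proof.
move=> tv; have /card_gt2P[a [b [c [[av bv cv] [ab bc ca]]]]] : 2 < #|star v| by rewrite card_star.
rewrite !inE in av bv cv.
have [t1 [t1v ab_t1]] := trans_of_pair (eqP av) (eqP bv) ab.
have ac : a != c by rewrite eq_sym.
have [t2 [t2v ac_t2]] := trans_of_pair (eqP av) (eqP cv) ac.
have t12 : t1 != t2.
  apply: contraNneq bc => t12.
  by rewrite -(partner_eq t1v ab_t1 ab) (partner_eq t1v _ ac) // t12.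
have [t1t|] := eqVneq t1 t; last by exists t1.
by exists t2; rewrite -t1t eq_sym.
Qed.

End Transitions.

Lemma count_halfedges (F : graph) (w : walk F) x :
  count_mem x (halfedges w) = (count (fun p => p.1 == x) w + count (fun p => p.2 == x) w)%N.
Proof. by elim: w => [|p w IH] //=; rewrite /halfedges /= in IH *; rewrite IH; lia. Qed.

Lemma count_single (F : graph) (w : walk F) x : all (@single_ok F) w ->
  count (fun p => (p.1 == x) || (p.2 == x)) w =
  (count (fun p => p.1 == x) w + count (fun p => p.2 == x) w)%N.
Proof.
elim: w => [|p w IH] //= /andP[/andP[p12 _] /IH ->].
have : ~~ ((p.1 == x) && (p.2 == x)) by apply: contra p12 => /andP[/eqP -> /eqP ->].
by case: (p.1 == x); case: (p.2 == x) => //= _; lia.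
Qed.

Section TransversalCircuits.
Variable F : graph.
Hypothesis F4 : four_regular F.
Local Notation V := (gV F).
Local Notation H := (gH F).
Variable tr : V -> trans F.
Hypothesis tr_at : forall v, trans_at v (tr v).

Definition tmate (y : H) : H := partner (tr (eps y)) y.

Lemma tmateP y : [/\ tmate y != y, eps (tmate y) = eps y, [set y; tmate y] \in val (tr (eps y))
  & partner (tr (eps y)) (tmate y) = y].
Proof. exact: (partnerP F4 (tr_at (eps y)) (erefl _)). Qed.

Lemma tmate_neq y : tmate y != y. Proof. by case: (tmateP y). Qed.
Lemma eps_tmate y : eps (tmate y) = eps y. Proof. by case: (tmateP y). Qed.
Lemma tmateK : involutive tmate.
Proof. by move=> y; rewrite {1}/tmate eps_tmate; case: (tmateP y). Qed.
Lemma tmate_block y : [set y; tmate y] \in val (tr (eps y)). Proof. by case: (tmateP y). Qed.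

Lemma tr_blockE v B : B \in val (tr v) -> exists2 a, eps a = v & B = [set a; tmate a].
Proof.
move=> Bt; have [_ card_t] := trans_atP F4 (tr_at v).
have /eqP/cards2P[a [b [ab BE]]] := card_t _ Bt.
have av : eps a = v.
  by have /subsetP/(_ a) := trans_block_sub F4 (tr_at v) Bt; rewrite BE !inE eqxx => /(_ isT)/eqP.
by exists a; rewrite // /tmate av (partner_eq F4 (tr_at v) _ ab) -?BE.
Qed.

(* Following a circuit of the partition, the half-edge after [y] is [step y]. *)
Definition step (y : H) : H := mate (tmate y).

Lemma step_inj : injective step.
Proof. by move=> y z /(can_inj (@mate_invol F))/(can_inj tmateK). Qed.

Lemma step_tmate_step y : step (tmate (step y)) = tmate y.
Proof. by rewrite /step tmateK mate_invol. Qed.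

Lemma mate_step y : mate y = step (tmate y).
Proof. by rewrite /step tmateK. Qed.

(* If [tmate h] lay on the orbit of [h], the traversals [h -> tmate h] and
   [tmate h -> h] of the same transition would meet halfway along the orbit,
   at a fixed point of [mate] (odd length) or of [tmate] (even length). *)
Lemma iter_step_neq_tmate h k : iter k step h != tmate h.
Proof.
apply/eqP => hk.
have back j : j <= k -> tmate (iter j step h) = iter (k - j) step h.
  elim: j => [|j IH] jk; first by rewrite subn0 hk.
  apply: step_inj; rewrite iterS step_tmate_step IH ?(ltnW jk) //.
  by rewrite -iterS subnSK.
have := odd_double_half k; set m := k./2; case: (odd k) => /= km.
  have := mate_nofix (iter m.+1 step h); rewrite mate_step back; last by lia.
  by rewrite (_ : k - m.+1 = m) ?eqxx //; lia.
have := tmate_neq (iter m step h); rewrite back; last by lia.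
by rewrite (_ : k - m = m) ?eqxx //; lia.
Qed.

Lemma not_fconnect_tmate y : ~~ fconnect step y (tmate y).
Proof.
apply/negP => /iter_findex yk.
by have := iter_step_neq_tmate y (findex step y (tmate y)); rewrite yk eqxx.
Qed.

Lemma fconnect_tmate y z : fconnect step y z -> fconnect step (tmate y) (tmate z).
Proof.
move=> /iter_findex <-; elim: (findex step y z) => [|k IH] /=; first exact: connect0.
apply: connect_trans IH _; rewrite fconnect_sym; last exact: step_inj.
by have := fconnect1 step (tmate (step (iter k step y))); rewrite step_tmate_step.
Qed.

Lemma fconnect_tmate_mate y : fconnect step (tmate y) (mate y).
Proof. by rewrite mate_step; apply: fconnect1. Qed.

Lemma fconnect_adj y z : fconnect step y z -> connect (@adj F) (eps y) (eps z).
Proof.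
move=> /iter_findex <-; elim: (findex step y z) => [|k IH] /=; first exact: connect0.
apply: connect_trans IH (connect1 _); apply/existsP; exists (tmate (iter k step y)).
by rewrite eps_tmate /step !eqxx.
Qed.

Definition circuit_walk (h : H) : walk F := [seq (y, tmate y) | y <- orbit step h].

Lemma closed_circuit_walk h : closed_walk (circuit_walk h).
Proof.
apply/and3P; split.
- by have := connect0 (frel step) h; rewrite fconnect_orbit /circuit_walk; case: orbit.
- by apply/allP => _ /mapP[y _ ->]; rewrite /single_ok /= eq_sym tmate_neq eps_tmate eqxx.
- rewrite /circuit_walk cycle_map; apply: sub_cycle (cycle_orbit step_inj h).
  by move=> y z /= /eqP <-.
Qed.

Lemma count_fst_circuit_walk h x : count (fun p => p.1 == x) (circuit_walk h) = fconnect step h x.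
Proof.
rewrite count_map -[count _ _]/(count_mem x (orbit step h)).
by rewrite (count_uniq_mem _ (orbit_uniq step h)) -fconnect_orbit.
Qed.

Lemma count_snd_circuit_walk h x :
  count (fun p => p.2 == x) (circuit_walk h) = fconnect step h (tmate x).
Proof.
rewrite count_map (eq_count (a2 := pred1 (tmate x))) => [|y /=]; last first.
  by rewrite -(inj_eq (can_inj tmateK)) tmateK.
by rewrite (count_uniq_mem _ (orbit_uniq step h)) -fconnect_orbit.
Qed.

Lemma fconnect_tmate_excl h y : fconnect step h y -> ~~ fconnect step h (tmate y).
Proof.
move=> hy; apply: contra (not_fconnect_tmate y); apply: connect_trans.
by rewrite fconnect_sym //; exact: step_inj.
Qed.

Lemma circuit_circuit_walk h : circuit (circuit_walk h).
Proof.
rewrite /circuit closed_circuit_walk; apply: count_mem_uniq => x.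
rewrite -(has_pred1 x) has_count count_halfedges count_fst_circuit_walk count_snd_circuit_walk.
case: (boolP (fconnect step h x)) => [/fconnect_tmate_excl/negbTE -> //|_].
by case: (fconnect step h (tmate x)).
Qed.

Lemma step_sym : connect_sym (frel step).
Proof. exact: fconnect_sym step_inj. Qed.

Local Notation root := (froot step).

(* The orbits of [h] and [tmate h] under [step] are the two directions of one
   circuit of the partition; [chosen] keeps one root per circuit. *)
Definition chosen (h : H) : bool := (root h == h) && (enum_rank h < enum_rank (root (tmate h))).

Lemma chosen_root h : chosen h -> root h = h.
Proof. by case/andP=> /eqP. Qed.

Lemma fconnect_chosen h y : chosen h -> fconnect step h y = (root y == h).
Proof. by move/chosen_root => {2}<-; rewrite eq_sym (root_connect step_sym). Qed.

Lemma chosen_root_tmate x : (chosen (root x) + chosen (root (tmate x)))%N = 1%N.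
Proof.
have root_tmate y : root (tmate (root y)) = root (tmate y).
  by apply/eqP; rewrite (root_connect step_sym) fconnect_tmate // step_sym connect_root.
rewrite /chosen !(root_root step_sym) !eqxx !andTb (root_tmate x) (root_tmate (tmate x)) tmateK.
have : root x != root (tmate x) by rewrite (root_connect step_sym) not_fconnect_tmate.
rewrite -(inj_eq enum_rank_inj) neq_ltn; by case: ltngtP.
Qed.

Definition on_circuit (h y : H) : bool := fconnect step h y || fconnect step h (tmate y).

Lemma on_circuit_mate h y : on_circuit h y -> on_circuit h (mate y).
Proof.
case/orP => hy; apply/orP; [right|left]; apply: connect_trans hy _.
  by have := fconnect_tmate_mate (mate y); rewrite mate_invol step_sym.
exact: fconnect_tmate_mate.
Qed.

Lemma on_circuit_adj h y : on_circuit h y -> connect (@adj F) (eps h) (eps y).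
Proof. by case/orP=> /fconnect_adj; rewrite ?eps_tmate. Qed.

Definition circ_root (y : H) : H := if chosen (root y) then root y else root (tmate y).

Lemma chosen_circ_root y : chosen (circ_root y).
Proof. by rewrite /circ_root; have := chosen_root_tmate y; case: ifP => //= _; case: chosen. Qed.

Lemma on_circuit_circ_root y : on_circuit (circ_root y) y.
Proof.
rewrite /circ_root /on_circuit; case: ifP => _; first by rewrite step_sym connect_root.
by rewrite (step_sym _ (tmate y)) connect_root orbT.
Qed.

Lemma circ_root_uniq h y : chosen h -> on_circuit h y -> circ_root y = h.
Proof.
move=> ch /orP[]; rewrite fconnect_chosen // => /eqP yh; rewrite /circ_root; first by rewrite yh ch.
by have := chosen_root_tmate y; rewrite yh ch; case: chosen.
Qed.

Definition tr_circuits : seq (walk F) := [seq circuit_walk h | h <- enum H & chosen h].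

Lemma size_tr_circuits : size tr_circuits = #|[set h | chosen h]|.
Proof.
rewrite size_map size_filter -sum1_count big_enum_cond -sum1_card.
by apply: eq_bigl => h; rewrite inE.
Qed.

Lemma sum_tr_circuits (G : walk F -> nat) :
  (\sum_(w <- tr_circuits) G w = \sum_(h | chosen h) G (circuit_walk h))%N.
Proof. by rewrite big_map big_filter big_enum_cond. Qed.

Lemma circuit_partition_tr_circuits : circuit_partition tr_circuits.
Proof.
split; first by apply/allP => _ /mapP[h _ ->]; apply: circuit_circuit_walk.
move=> x; rewrite sum_tr_circuits -(chosen_root_tmate x) -!sum_nat_eq -big_split /=.
apply: eq_bigr => h ch; have /and3P[_ single _] := closed_circuit_walk h.
rewrite count_single // count_fst_circuit_walk count_snd_circuit_walk.
by rewrite !fconnect_chosen // ![_ == h]eq_sym.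
Qed.

Definition tr_set : {set trans F} := [set tr v | v : V].

Lemma tau_tr_circuits : tau tr_circuits = tr_set.
Proof.
apply/setP => t; rewrite inE; apply/forallP/imsetP => [in_circ|[u _ ->] B].
  have [v tv] := trans_vertex t.
  have /card_gt0P[y] : 0 < #|star v| by rewrite card_star.
  rewrite inE => /eqP yv; have [_ _ yz_t _] := partnerP F4 tv yv.
  have /implyP/(_ yz_t)/hasP[_ /mapP[h _ ->] /hasP[_ /mapP[y' _ ->]]] :=
    in_circ [set y; partner t y].
  rewrite /= => /eqP y'E; exists v => //; apply: (eq_trans_block F4 tv (tr_at v) yz_t).
  have /subsetP/(_ y') := trans_block_sub F4 tv yz_t.
  by rewrite -y'E !inE eqxx => /(_ isT)/eqP <-; apply: tmate_block.
apply/implyP => /tr_blockE[a _ ->]; set c := circ_root a.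
apply/hasP; exists (circuit_walk c).
  by apply: map_f; rewrite mem_filter chosen_circ_root mem_enum.
case/orP: (on_circuit_circ_root a) => ca; apply/hasP.
  by exists (a, tmate a) => //; apply: map_f; rewrite -fconnect_orbit.
exists (tmate a, tmate (tmate a)); last by rewrite tmateK setUC.
by apply: map_f; rewrite -fconnect_orbit.
Qed.

End TransversalCircuits.

Section CircuitFlows.
Variable F : graph.
Hypothesis F4 : four_regular F.
Local Notation V := (gV F).
Local Notation H := (gH F).
Variable tl : H -> bool.
Hypothesis tl_dir : directed tl.
Variable o : trans F -> {set H}.
Hypothesis o_trans : trans_orientation o.
Local Open Scope ring_scope.

Lemma sum_outflow_block v t B x : trans_at v t -> B \in val t ->
  netflow tl v x = 0 -> tflow tl o t x = 0 -> \sum_(h in B) outflow tl x h = 0.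
Proof.
move=> tv Bt x_v x_t; rewrite (tflowE tl_dir) in x_t.
case: (trans_blockE F4 tv Bt (o_trans t)) x_t => [<- //|-> x_t].
move: x_v; rewrite /netflow (eq_bigl (mem (star v))); last by move=> h; rewrite /= in_star.
by rewrite (big_setID B) /= x_t addr0 (setIidPr (trans_block_sub F4 tv Bt)).
Qed.

Variable tr : V -> trans F.
Hypothesis tr_at : forall v, trans_at v (tr v).
Local Notation tmate := (tmate tr).
Local Notation step := (step tr).
Local Notation on_circuit := (on_circuit tr).
Local Notation chosen := (chosen tr).
Local Notation cycle_of h := (sigma tl (circuit_walk tr h)).

Lemma outflow_circuit_walk h y : outflow tl (cycle_of h) y =
  (fconnect step h (tmate y))%:R - (fconnect step h y)%:R.
Proof.
rewrite (outflow_sigma tl_dir) ?closed_circuit_walk //.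
by rewrite count_fst_circuit_walk (count_snd_circuit_walk F4 tr_at).
Qed.

Lemma tflow_circuit_walk u h : tflow tl o (tr u) (cycle_of h) = 0.
Proof.
have [a _ oE] := tr_blockE F4 tr_at (o_trans (tr u)).
rewrite (tflowE tl_dir) oE sum_set2 1?eq_sym ?tmate_neq // !outflow_circuit_walk tmateK //.
by rewrite addrC subrKA subrr.
Qed.

Lemma outflow_circuit_walk_off c y : ~~ on_circuit c y -> outflow tl (cycle_of c) y = 0.
Proof. by rewrite outflow_circuit_walk => /norP[/negbTE -> /negbTE ->]; rewrite subrr. Qed.

Lemma outflow_circuit_walk_chosen c h : chosen c -> chosen h ->
  outflow tl (cycle_of c) h = if c == h then -1 else 0.
Proof.
move=> cc ch; rewrite outflow_circuit_walk !(fconnect_chosen F4 tr_at) //.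
rewrite (chosen_root ch) [h == c]eq_sym.
suff -> : (froot step (tmate h) == c) = false by case: (c == h); rewrite ?sub0r ?subr0.
apply: contraTF cc => /eqP <-; have := chosen_root_tmate F4 tr_at h.
by rewrite (chosen_root ch) ch; case: (chosen _).
Qed.

Section BalancedFlow.
Variable x : edge F -> rat.
Hypothesis x_bal : forall v, netflow tl v x = 0.
Hypothesis x_tr : forall v, tflow tl o (tr v) x = 0.

Lemma outflow_tmate y : outflow tl x (tmate y) = - outflow tl x y.
Proof.
have := sum_outflow_block (tr_at (eps y)) (tmate_block F4 tr_at y) (x_bal _) (x_tr _).
by rewrite sum_set2 1?eq_sym ?tmate_neq // addrC => /eqP; rewrite addr_eq0 => /eqP.
Qed.

Lemma outflow_step y : outflow tl x (step y) = outflow tl x y.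
Proof. by rewrite -[step y]/(mate (tmate y)) outflow_mate // outflow_tmate opprK. Qed.

Lemma outflow_fconnect y z : fconnect step y z -> outflow tl x z = outflow tl x y.
Proof. by move=> /iter_findex <-; elim: (findex _ _ _) => //= k <-; apply: outflow_step. Qed.

Lemma outflow_on_circuit c y : on_circuit c y ->
  outflow tl x y = outflow tl x c \/ outflow tl x y = - outflow tl x c.
Proof.
case/orP=> /outflow_fconnect; first by left.
by rewrite outflow_tmate => <-; right; rewrite opprK.
Qed.

Lemma outflow_circuit_walk_on c y : on_circuit c y ->
  outflow tl x c * outflow tl (cycle_of c) y = - outflow tl x y.
Proof.
rewrite outflow_circuit_walk; case/orP => [cy|cy'].
  by rewrite (negbTE (fconnect_tmate_excl F4 tr_at cy)) cy (outflow_fconnect cy) /=; ring.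
have := fconnect_tmate_excl F4 tr_at cy'; rewrite tmateK // => /negbTE ->.
by rewrite cy' -(outflow_fconnect cy') outflow_tmate /=; ring.
Qed.

End BalancedFlow.
End CircuitFlows.

Section CycleMatrix.
Variable F : graph.
Local Notation H := (gH F).
Variable tl : H -> bool.
Hypothesis tl_dir : directed tl.
Variable o : trans F -> {set H}.
Variables (E : {set edge F}) (I : finType) (w : I -> walk F).
Hypothesis w_span : cycle_spanning_set tl E w.
Local Notation n := #|{: edge F}|.
Local Notation rk := (crank (CMDelta tl o w)).
Local Open Scope ring_scope.

Definition unrow (u : 'rV[rat]_n) (e : edge F) : rat := u 0 (enum_rank e).

Lemma rowvK x : unrow (rowv x) =1 x.
Proof. by move=> e; rewrite /unrow mxE enum_rankK. Qed.

Lemma unrowK u : rowv (unrow u) = u.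
Proof. by apply/rowP => k; rewrite mxE /unrow enum_valK. Qed.

Lemma eq_cycvec x y : x =1 y -> cycvec tl E x -> cycvec tl E y.
Proof.
move=> xy [xE xv]; split=> [e eE|v]; first by rewrite -xy xE.
by under eq_bigr do rewrite -xy; apply: xv.
Qed.

Lemma eq_tflow t x y : x =1 y -> tflow tl o t x = tflow tl o t y.
Proof. by move=> xy; apply: eq_bigr => e _; rewrite xy. Qed.

Lemma cycvec_sum (J : finType) (c : J -> rat) (xs : J -> edge F -> rat) :
  (forall j, cycvec tl E (xs j)) -> cycvec tl E (fun e => \sum_j c j * xs j e).
Proof.
move=> xs_cyc; apply/cycvecP; split=> [e eE|v].
  by apply: big1 => j _; have /cycvecP[-> //] := xs_cyc j; rewrite mulr0.
transitivity (\sum_j c j * netflow tl v (xs j)).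
  rewrite /netflow /outflow; under eq_bigr do rewrite mulr_sumr.
  rewrite exchange_big /=; apply: eq_bigr => j _; rewrite mulr_sumr.
  by apply: eq_bigr => h _; rewrite mulrCA.
by apply: big1 => j _; have /cycvecP[_ ->] := xs_cyc j; rewrite mulr0.
Qed.

Definition CM : 'M[rat]_(#|{: I}|, n) := \matrix_(i < #|{: I}|) rowv (sigma tl (w (enum_val i))).

Lemma sub_CMP u : (u <= CM)%MS <-> cycvec tl E (unrow u).
Proof.
have [w_cyc [_ [B [_ [_ [_ [_ B_span]]]]]]] := w_span; split.
  case/submxP => D ->; apply: eq_cycvec (cycvec_sum (D 0) _) => [e|i].
    by rewrite /unrow !mxE; apply: eq_bigr => i _; rewrite !mxE enum_rankK.
  by have /andP[cw aw] := w_cyc (enum_val i); exact: cycvec_sigma.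
move/B_span; rewrite unrowK => /submx_trans; apply; apply/row_subP => k.
rewrite rowK.
have -> : rowv (sigma tl (w (enum_val k))) = row (enum_rank (enum_val k)) CM.
  by rewrite rowK enum_rankK.
exact: row_sub.
Qed.

Definition Dmx (S : {set trans F}) : 'M[rat]_(n, #|S|) :=
  \matrix_(j < n, k < #|S|) Delta tl o (enum_val j) (enum_val k).

Lemma tflow_enum t x : tflow tl o t x = \sum_(j < n) x (enum_val j) * Delta tl o (enum_val j) t.
Proof.
rewrite /tflow -(big_enum_val (fun e => x e * Delta tl o e t)).
by apply: eq_bigl => e; rewrite inE.
Qed.

Lemma mulDmx u S k : (u *m Dmx S) 0 k = tflow tl o (enum_val k) (unrow u).
Proof. by rewrite mxE tflow_enum; apply: eq_bigr => j _; rewrite mxE /unrow enum_valK. Qed.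

Definition cyc_ker (S : {set trans F}) := (CM :&: kermx (Dmx S))%MS.

Lemma sub_cyc_kerP u S : (u <= cyc_ker S)%MS <->
  cycvec tl E (unrow u) /\ forall t, t \in S -> tflow tl o t (unrow u) = 0.
Proof.
rewrite sub_capmx sub_kermx; split.
  case/andP => /sub_CMP u_cyc /eqP uD; split=> // t tS.
  by have := mulDmx u (enum_rank_in tS t); rewrite uD mxE enum_rankK_in.
case=> /sub_CMP -> u0; apply/eqP/rowP => k; rewrite mulDmx mxE u0 //; exact: enum_valP.
Qed.

Lemma rowv_cyc_kerP x S : (rowv x <= cyc_ker S)%MS <->
  cycvec tl E x /\ forall t, t \in S -> tflow tl o t x = 0.
Proof.
rewrite sub_cyc_kerP; split=> -[x_cyc x0]; split.
- exact: eq_cycvec (rowvK x) x_cyc.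
- by move=> t tS; rewrite -(x0 t tS) (eq_tflow _ (rowvK x)).
- by apply: eq_cycvec x_cyc => e; rewrite rowvK.
- by move=> t tS; rewrite (eq_tflow _ (rowvK x)) x0.
Qed.

Lemma crank_CMDelta S : rk S = \rank (CM *m Dmx S).
Proof.
rewrite /crank -mxrank_tr; congr (\rank _); apply/matrixP => i k.
rewrite !mxE; transitivity (tflow tl o (enum_val k) (sigma tl (w (enum_val i)))); first by [].
by rewrite tflow_enum; apply: eq_bigr => j _; rewrite !mxE.
Qed.

Lemma crank_ker S : (rk S + \rank (cyc_ker S))%N = \rank CM.
Proof. by rewrite crank_CMDelta mxrank_mul_ker. Qed.

Lemma cyc_kerS (S S' : {set trans F}) : S \subset S' -> (cyc_ker S' <= cyc_ker S)%MS.
Proof.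
move=> /subsetP sub; apply/row_subP => k; have /sub_cyc_kerP[k_cyc k0] := row_sub k (cyc_ker S').
by apply/sub_cyc_kerP; split=> // t /sub; apply: k0.
Qed.

Lemma crankS (S S' : {set trans F}) : S \subset S' -> (rk S <= rk S')%N.
Proof. by move=> /cyc_kerS/mxrankS; have := crank_ker S; have := crank_ker S'; lia. Qed.

Lemma crank_le_rank S : (rk S <= \rank CM)%N.
Proof. by have := crank_ker S; lia. Qed.

Lemma crank_le_card S : (rk S <= #|S|)%N.
Proof. exact: rank_leq_row. Qed.

Lemma crankU1_le (S : {set trans F}) t : (rk (t |: S) <= (rk S).+1)%N.
Proof.
pose Dt : 'cV[rat]_n := \col_j Delta tl o (enum_val j) t.
have ker_t : ((cyc_ker S :&: kermx Dt) <= cyc_ker (t |: S))%MS.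
  apply/row_subP => k; have := row_sub k (cyc_ker S :&: kermx Dt)%MS.
  rewrite sub_capmx => /andP[/sub_cyc_kerP[k_cyc k0] /sub_kermxP kDt].
  apply/sub_cyc_kerP; split=> // s; rewrite !inE => /orP[/eqP ->|]; last exact: k0.
  have := congr1 (fun M : 'M[rat]_1 => M 0 0) kDt; rewrite !mxE => <-.
  by rewrite tflow_enum; apply: eq_bigr => j _; rewrite /unrow enum_valK [Dt _ _]mxE.
have := mxrank_mul_ker (cyc_ker S) Dt; have := rank_leq_col (cyc_ker S *m Dt).
have := mxrankS ker_t; have := crank_ker S; have := crank_ker (t |: S); lia.
Qed.

Lemma crankU1 (S : {set trans F}) t x : cycvec tl E x ->
  (forall s, s \in S -> tflow tl o s x = 0) -> tflow tl o t x != 0 -> rk (t |: S) = (rk S).+1.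
Proof.
move=> x_cyc xS xt.
have xS' : (rowv x <= cyc_ker S)%MS by apply/rowv_cyc_kerP.
have xt' : ~~ (rowv x <= cyc_ker (t |: S))%MS.
  by apply/negP => /rowv_cyc_kerP[_ /(_ t (setU11 _ _)) xt0]; rewrite xt0 eqxx in xt.
have : (cyc_ker (t |: S) < cyc_ker S)%MS.
  rewrite ltmxE cyc_kerS ?subsetUr //=; apply: contra xt' => /(submx_trans xS'); exact.
rewrite ltmxErank => /andP[_ lt_ker]; apply/eqP; rewrite eqn_leq crankU1_le /=.
by rewrite -(ltn_add2r (\rank (cyc_ker S))) crank_ker -(crank_ker (t |: S)) ltn_add2l.
Qed.

End CycleMatrix.

Lemma adj_sym (F : graph) : connect_sym (@adj F).
Proof.
apply: sym_connect_sym => u v; apply/existsP/existsP => -[h /andP[/eqP hu /eqP hv]];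
  by exists (mate h); rewrite mate_invol hu hv !eqxx.
Qed.

Definition one_edge_per_component (F : graph) (E : {set edge F}) : Prop :=
  forall e1 e2 : edge F, e1 \in E -> e2 \in E ->
  forall h1 h2 : gH F, h1 \in val e1 -> h2 \in val e2 ->
  connect (@adj F) (eps h1) (eps h2) -> e1 = e2.

Section TransversalKernel.
Variable F : graph.
Hypothesis F4 : four_regular F.
Local Notation V := (gV F).
Local Notation H := (gH F).
Variable tl : H -> bool.
Hypothesis tl_dir : directed tl.
Variable o : trans F -> {set H}.
Hypothesis o_trans : trans_orientation o.
Variables (E : {set edge F}) (I : finType) (w : I -> walk F).
Hypothesis w_span : cycle_spanning_set tl E w.
Variable tr : V -> trans F.
Hypothesis tr_at : forall v, trans_at v (tr v).
Local Notation n := #|{: edge F}|.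
Local Notation on_circuit := (on_circuit tr).
Local Notation chosen := (chosen tr).
Local Notation circ_root := (circ_root tr).
Local Notation cycle_of h := (sigma tl (circuit_walk tr h)).
Local Open Scope ring_scope.

Lemma meets_circuit_walk c : ~~ avoids E (circuit_walk tr c) <->
  exists2 e, e \in E & exists2 z, z \in val e & on_circuit c z.
Proof.
split.
  case/allPn => _ /mapP[y cy ->] /forallPn[e /=]; rewrite negb_imply negb_and !negbK.
  case/andP=> eE yE; exists e => //; rewrite -fconnect_orbit in cy.
  case/orP: yE => ?; [exists y | exists (tmate tr y)] => //; apply/orP; first by left.
  by right; rewrite tmateK.
case=> e eE [z ze /orP[cz|cz]]; apply/allPn.
  exists (z, tmate tr z); first by apply: map_f; rewrite -fconnect_orbit.
  by apply/forallPn; exists e; rewrite /= eE ze.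
exists (tmate tr z, tmate tr (tmate tr z)); first by apply: map_f; rewrite -fconnect_orbit.
by apply/forallPn; exists e; rewrite /= eE tmateK // ze andbF.
Qed.

Definition avoiding : {set H} := [set h | chosen h && avoids E (circuit_walk tr h)].

Definition avoiding_mx : 'M[rat]_(#|avoiding|, n) :=
  \matrix_(k < #|avoiding|) rowv (cycle_of (enum_val k)).

Lemma avoiding_mx_sub : (avoiding_mx <= cyc_ker tl o w (tr_set tr))%MS.
Proof.
apply/row_subP => k; rewrite rowK; apply/(rowv_cyc_kerP tl_dir o w_span); split.
  have := enum_valP k; rewrite inE => /andP[_]; apply: cycvec_sigma => //.
  exact: closed_circuit_walk.
by move=> _ /imsetP[u _ ->]; apply: tflow_circuit_walk.
Qed.

Section Decomposition.
Variable x : edge F -> rat.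
Hypothesis x_cyc : cycvec tl E x.
Hypothesis x_tr : forall v, tflow tl o (tr v) x = 0.
(* [x] is constant up to sign along each circuit of [tr], and it vanishes on
   the circuits that meet [E]. *)
Lemma outflow_decomp y :
  outflow tl x y = \sum_(c in avoiding) - outflow tl x c * outflow tl (cycle_of c) y.
Proof.
have [xE x_bal] := (cycvecP tl E x).1 x_cyc.
move: (on_circuit_circ_root F4 tr_at y) (chosen_circ_root F4 tr_at y).
move cE: (circ_root y) => c c_on c_ch.
have off c' : c' \in avoiding -> c' != c -> outflow tl (cycle_of c') y = 0.
  rewrite inE => /andP[c'_ch _] c'c; apply: (outflow_circuit_walk_off F4 tl_dir tr_at).
  by apply/negP => /(circ_root_uniq F4 tr_at c'_ch); rewrite cE => cc'; rewrite cc' eqxx in c'c.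
have [cA|cA] := boolP (c \in avoiding).
  rewrite (bigD1 c) //= big1 ?addr0 => [|c' /andP[c'A c'c]]; last by rewrite off ?mulr0.
  by rewrite mulNr (outflow_circuit_walk_on F4 tl_dir o_trans tr_at x_bal x_tr c_on) opprK.
rewrite big1 => [|c' c'A]; last by rewrite off ?mulr0 //; apply: contraNneq cA => <-.
have : ~~ avoids E (circuit_walk tr c) by move: cA; rewrite inE c_ch.
case/meets_circuit_walk => e eE [z ze cz].
have xz : outflow tl x z = 0 by move: ze; rewrite in_edge /outflow => /eqP <-; rewrite xE ?mulr0.
have xc : outflow tl x c = 0.
  case: (outflow_on_circuit F4 tl_dir o_trans tr_at x_bal x_tr cz); rewrite xz => /esym/eqP //.
  by rewrite oppr_eq0 => /eqP.
by case: (outflow_on_circuit F4 tl_dir o_trans tr_at x_bal x_tr c_on) => ->; rewrite xc ?oppr0.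
Qed.

Lemma rowv_decomp : rowv x = (\row_k (- outflow tl x (enum_val k))) *m avoiding_mx.
Proof.
apply/rowP => j; rewrite !mxE; have [y ej] := edge_of_onto (enum_val j).
rewrite ej (edge_outflow tl x y) outflow_decomp big_enum_val mulr_sumr.
by apply: eq_bigr => k _; rewrite !mxE ej (edge_outflow tl (cycle_of _) y) mulrCA.
Qed.

End Decomposition.

Lemma cyc_ker_sub_avoiding_mx : (cyc_ker tl o w (tr_set tr) <= avoiding_mx)%MS.
Proof.
apply/row_subP => k.
have /(sub_cyc_kerP tl_dir o w_span)[k_cyc k0] := row_sub k (cyc_ker tl o w (tr_set tr)).
rewrite -(unrowK (row k _)) (rowv_decomp k_cyc) ?submxMl // => v.
by apply: k0; apply: imset_f.
Qed.

Lemma avoiding_mx_free : row_free avoiding_mx.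
Proof.
rewrite -kermx_eq0; apply/eqP/row_matrixP => k; rewrite row0; set v := row k _.
have vC : v *m avoiding_mx = 0 by apply/sub_kermxP; apply: row_sub.
clearbody v; apply/rowP => l; set h := enum_val l.
have chosen_ev (l' : 'I_#|avoiding|) : chosen (enum_val l').
  by have := enum_valP l'; rewrite inE => /andP[].
have := congr1 (fun M : 'rV[rat]_n => hsign tl h * M 0 (enum_rank (edge_of h))) vC.
rewrite /= /avoiding_mx !mxE mulr0 mulr_sumr (bigD1 l) //= big1 ?addr0 => [|l' l'l].
  rewrite !mxE enum_rankK (edge_outflow tl (cycle_of h)).
  rewrite (outflow_circuit_walk_chosen F4 tl_dir tr_at (chosen_ev l) (chosen_ev l)) (eqxx h).
  rewrite mulrCA (mulrA (hsign tl h)) hsign_sqr // mul1r mulrN1.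
  by move/eqP; rewrite oppr_eq0 => /eqP.
rewrite !mxE enum_rankK (edge_outflow tl (cycle_of _)).
rewrite (outflow_circuit_walk_chosen F4 tl_dir tr_at (chosen_ev l') (chosen_ev l)).
by rewrite (inj_eq enum_val_inj) (negbTE l'l) !mulr0.
Qed.

Lemma rank_cyc_ker_tr : \rank (cyc_ker tl o w (tr_set tr)) = #|avoiding|.
Proof.
have /eqP <- := avoiding_mx_free; apply/eqmx_rank.
by apply/andP; split; [exact: cyc_ker_sub_avoiding_mx | exact: avoiding_mx_sub].
Qed.

Lemma on_circuit_edge h (e : edge F) y z :
  y \in val e -> z \in val e -> on_circuit h z -> on_circuit h y.
Proof.
rewrite !in_edge => /eqP -> /eqP yz hz; have : y \in val (edge_of z) by rewrite -yz !inE eqxx.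
by rewrite !inE => /orP[] /eqP ->; last exact: on_circuit_mate.
Qed.

Lemma card_chosen : one_edge_per_component E ->
  #|[set h | chosen h]| = (#|avoiding| + #|E|)%N.
Proof.
move=> E_sep; have e_ex (e : edge F) : exists h, h \in val e.
  by have [h ->] := edge_of_onto e; exists h; rewrite in_edge.
pose he e := xchoose (e_ex e); have he_in e : he e \in val e := xchooseP (e_ex e).
have meetingE : [set h | chosen h] :\: avoiding = [set circ_root (he e) | e in E].
  apply/setP => h; rewrite !inE andbC negb_and; apply/idP/imsetP => [|[e eE ->]].
    case/andP=> ch; rewrite ch /= => /meets_circuit_walk[e eE [z ze hz]].
    by exists e => //; apply/esym/(circ_root_uniq F4 tr_at ch)/(on_circuit_edge (he_in e) ze).
  rewrite chosen_circ_root //=; apply/meets_circuit_walk; exists e => //.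
  by exists (he e); last exact: on_circuit_circ_root.
rewrite -(cardsID avoiding [set h | chosen h]) meetingE card_in_imset => [|e1 e2 e1E e2E eq12].
  by congr (_ + _)%N; apply: eq_card => h; rewrite !inE; case: chosen.
apply: (E_sep _ _ e1E e2E _ _ (he_in e1) (he_in e2)).
have root_adj e : connect (@adj F) (eps (circ_root (he e))) (eps (he e)).
  exact/(on_circuit_adj F4 tr_at)/on_circuit_circ_root.
by apply: (connect_trans _ (root_adj e2)); rewrite adj_sym -eq12.
Qed.

End TransversalKernel.

Section Subtransversals.
Variable F : graph.
Hypothesis F4 : four_regular F.
Local Notation V := (gV F).

Lemma subtransversal_uniq (S : {set trans F}) v s1 s2 : subtransversal S ->
  s1 \in S -> s2 \in S -> trans_at v s1 -> trans_at v s2 -> s1 = s2.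
Proof.
by move=> /forallP/(_ v)/card_le1_eqP S1 s1S s2S s1v s2v; apply: S1; rewrite inE ?s1S ?s2S.
Qed.

Lemma card_subtransversal (S : {set trans F}) : subtransversal S -> #|S| <= #|V|.
Proof.
move=> S_sub; pose vx (t : trans F) := xchoose (trans_vertex t).
have vxP t : trans_at (vx t) t := xchooseP (trans_vertex t).
rewrite -(card_in_imset (f := vx)) ?max_card // => s1 s2 s1S s2S eq12.
by apply: (subtransversal_uniq S_sub s1S s2S (vxP s1)); rewrite eq12 vxP.
Qed.

Lemma subtransversal0 : subtransversal (set0 : {set trans F}).
Proof. by apply/forallP => v; apply/card_le1_eqP => s1 s2; rewrite !inE. Qed.

Definition covered (S : {set trans F}) (v : V) : bool := [exists t in S, trans_at v t].

Definition uncovered (S : {set trans F}) : {set V} := [set v | ~~ covered S v].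

Lemma subtransversalU1 (S : {set trans F}) v t : subtransversal S -> ~~ covered S v ->
  trans_at v t -> subtransversal (t |: S).
Proof.
move=> S_sub vS tv; apply/forallP => u; apply/card_le1_eqP => s1 s2; rewrite !inE.
have at_v s : s \in S -> trans_at u s -> u != v.
  by move=> sS su; apply: contraNneq vS => <-; apply/existsP; exists s; rewrite sS su.
move=> /andP[/orP[/eqP-> | s1S] s1u] /andP[/orP[/eqP-> | s2S] s2u] //.
- by have := at_v _ s2S s2u; rewrite (trans_at_uniq F4 s1u tv) eqxx.
- by have := at_v _ s1S s1u; rewrite (trans_at_uniq F4 s2u tv) eqxx.
- exact: subtransversal_uniq S_sub s2S s1S s2u s1u.
Qed.

Lemma uncovered0 : uncovered set0 = [set: V].
Proof. by apply/setP => v; rewrite !inE; apply/existsP => -[t]; rewrite inE. Qed.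

Lemma card_uncoveredU1 (S : {set trans F}) v t : ~~ covered S v -> trans_at v t ->
  #|uncovered S| = #|uncovered (t |: S)|.+1.
Proof.
move=> vS tv; rewrite (cardsD1 v) inE vS add1n; congr _.+1; apply: eq_card => u.
rewrite !inE /covered; have [->|uv] /= := eqVneq u v.
  by apply/esym/negbTE; rewrite negbK; apply/existsP; exists t; rewrite setU11 tv.
congr (~~ _); apply/existsP/existsP => -[s /andP[sS su]]; first by exists s; rewrite inE sS orbT su.
move: sS; rewrite !inE => /orP[/eqP st | sS]; last by exists s; rewrite sS su.
by rewrite st in su; rewrite (trans_at_uniq F4 su tv) eqxx in uv.
Qed.

Lemma subtransversal_ind (P : {set trans F} -> Prop) :
  (forall S, subtransversal S -> uncovered S = set0 -> P S) ->
  (forall S v, subtransversal S -> ~~ covered S v ->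
     (forall t, trans_at v t -> P (t |: S)) -> P S) ->
  forall S, subtransversal S -> P S.
Proof.
move=> P_full P_step S; move Sk: #|uncovered S| => k.
elim: k S Sk => [|k IH] S Sk S_sub.
  by apply: P_full => //; apply/eqP; rewrite -cards_eq0 Sk.
have /card_gt0P[v] : 0 < #|uncovered S| by rewrite Sk.
rewrite inE => vS; apply: (P_step _ _ S_sub vS) => t tv.
apply: (IH _ _ (subtransversalU1 S_sub vS tv)).
by move: Sk; rewrite (card_uncoveredU1 vS tv) => -[].
Qed.

Definition complete (S : {set trans F}) (v : V) : trans F :=
  if [pick t in S | trans_at v t] is Some t then t else xchoose (trans_at_exists F4 v).

Lemma complete_at S v : trans_at v (complete S v).
Proof.
by rewrite /complete; case: pickP => [t /andP[] //|_]; apply: (xchooseP (trans_at_exists F4 v)).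
Qed.

Lemma complete_in (S : {set trans F}) v s : subtransversal S -> s \in S -> trans_at v s ->
  complete S v = s.
Proof.
move=> S_sub sS sv; rewrite /complete; case: pickP => [t /andP[tS tv]|none].
  exact: subtransversal_uniq S_sub tS sS tv sv.
by have := none s; rewrite sS sv.
Qed.

Lemma sub_complete (S : {set trans F}) : subtransversal S -> S \subset tr_set (complete S).
Proof.
move=> S_sub; apply/subsetP => s sS; have [v sv] := trans_vertex s.
by apply/imsetP; exists v; rewrite ?(complete_in S_sub sS sv).
Qed.

Lemma transversal_complete (S : {set trans F}) : subtransversal S -> uncovered S = set0 ->
  S = tr_set (complete S).
Proof.
move=> S_sub S_cov; apply/eqP; rewrite eqEsubset sub_complete //=.
apply/subsetP => _ /imsetP[v _ ->]; have : v \notin uncovered S by rewrite S_cov inE.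
by rewrite inE negbK => /existsP[s /andP[sS sv]]; rewrite (complete_in S_sub sS sv).
Qed.

Lemma greedy_transversal (f : {set trans F} -> nat) :
  (forall S v, subtransversal S -> ~~ covered S v ->
     exists2 t, trans_at v t & f (t |: S) = (f S).+1) ->
  forall S, subtransversal S ->
  exists T, [/\ subtransversal T, uncovered T = set0 & f T = f S + #|uncovered S|].
Proof.
move=> f_step; apply: subtransversal_ind => [S S_sub S_cov|S v S_sub vS IH].
  by exists S; rewrite S_cov cards0 addn0.
have [t tv ft] := f_step S v S_sub vS; have [T [T_sub T_cov fT]] := IH t tv.
by exists T; rewrite fT ft (card_uncoveredU1 vS tv) addSnnS.
Qed.

End Subtransversals.

Section CrankStep.
Variable F : graph.
Hypothesis F4 : four_regular F.
Local Notation V := (gV F).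
Local Notation H := (gH F).
Variable tl : H -> bool.
Hypothesis tl_dir : directed tl.
Variable o : trans F -> {set H}.
Hypothesis o_trans : trans_orientation o.
Local Open Scope ring_scope.

Lemma outflow_vertex_eq0 v x h : eps h = v -> netflow tl v x = 0 ->
  (forall t, trans_at v t -> tflow tl o t x = 0) -> outflow tl x h = 0.
Proof.
move=> hv x_v x_t.
have pair a b : eps a = v -> eps b = v -> a != b -> outflow tl x a + outflow tl x b = 0.
  move=> av bv ab; have [t [tv abt]] := trans_of_pair F4 av bv ab.
  by rewrite -sum_set2 // (sum_outflow_block F4 tl_dir o_trans tv abt x_v (x_t t tv)).
have /card_gt1P[a [b [aH bH ab]]] : (1 < #|star v :\ h|)%N.
  by move: (cardsD1 h (star v)); rewrite (card_star F4) in_star hv eqxx add1n => -[<-].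
move: aH bH; rewrite !inE => /andP[ah /eqP av] /andP[bh /eqP bv].
rewrite eq_sym in ah; rewrite eq_sym in bh.
have := pair _ _ hv av ah; have := pair _ _ hv bv bh; have := pair _ _ av bv ab; lra.
Qed.

Section Probe.
Variables (S : {set trans F}) (v : V) (t : trans F) (h0 : H).
Hypotheses (S_sub : subtransversal S) (vS : ~~ covered S v) (tv : trans_at v t) (h0v : eps h0 = v).

Definition probe_tr (u : V) : trans F := if u == v then t else complete F4 S u.

Lemma probe_tr_at u : trans_at u (probe_tr u).
Proof. by rewrite /probe_tr; case: eqP => [->|_]; last exact: complete_at. Qed.

Lemma sub_probe_tr : t |: S \subset tr_set probe_tr.
Proof.
apply/subsetP => s; rewrite !inE => /orP[/eqP -> | sS].
  by apply/imsetP; exists v; rewrite // /probe_tr eqxx.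
have [u su] := trans_vertex s; apply/imsetP; exists u => //; rewrite /probe_tr.
case: eqP => [uv|_]; last by rewrite (complete_in F4 S_sub sS su).
by case/negP: vS; apply/existsP; exists s; rewrite sS -uv.
Qed.

Definition probe : edge F -> rat := sigma tl (circuit_walk probe_tr h0).

Lemma netflow_probe u : netflow tl u probe = 0.
Proof. exact: (netflow_sigma tl_dir u (closed_circuit_walk F4 probe_tr_at h0)). Qed.

Lemma tflow_probe s : s \in t |: S -> tflow tl o s probe = 0.
Proof.
move=> /(subsetP sub_probe_tr)/imsetP[u _ ->].
exact: (tflow_circuit_walk F4 tl_dir o_trans probe_tr_at).
Qed.

Lemma outflow_probe_h0 : outflow tl probe h0 = -1.
Proof.
rewrite (outflow_circuit_walk F4 tl_dir probe_tr_at) connect0.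
by rewrite (negbTE (not_fconnect_tmate F4 probe_tr_at h0)) sub0r.
Qed.

Lemma probe_support e : probe e != 0 -> exists2 z, z \in val e & connect (@adj F) v (eps z).
Proof.
have [z ->] := edge_of_onto e; rewrite (edge_outflow tl probe z) mulf_eq0 negb_or => /andP[_ nz].
exists z; first by rewrite in_edge.
move: nz; rewrite (outflow_circuit_walk F4 tl_dir probe_tr_at) -h0v.
case: (boolP (fconnect (step probe_tr) h0 z)) => [/(fconnect_adj F4 probe_tr_at) //|_].
case: (boolP (fconnect (step probe_tr) h0 (tmate probe_tr z))) => [|_]; last by rewrite subrr eqxx.
by move=> /(fconnect_adj F4 probe_tr_at) + _; rewrite (eps_tmate F4 probe_tr_at).
Qed.

Lemma tflow_probe_S s : s \in S -> tflow tl o s probe = 0.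
Proof. by move=> sS; apply: tflow_probe; rewrite inE sS orbT. Qed.

End Probe.

Variables (E : {set edge F}) (I : finType) (w : I -> walk F).
Hypothesis E_sep : one_edge_per_component E.
Hypothesis w_span : cycle_spanning_set tl E w.
Local Notation rk := (crank (CMDelta tl o w)).

(* By [crankU1], [no_step] holds when no transition at [v] raises the rank. *)
Section NoStep.
Variables (S : {set trans F}) (v : V) (h0 : H).
Hypotheses (S_sub : subtransversal S) (vS : ~~ covered S v) (h0v : eps h0 = v).
Hypothesis no_step : forall t x, trans_at v t -> cycvec tl E x ->
  (forall s, s \in S -> tflow tl o s x = 0) -> tflow tl o t x = 0.
Local Notation y t := (probe S v t h0).

Lemma probe_meets_E t : trans_at v t -> exists2 e, e \in E & y t e != 0.
Proof.
move=> tv; have [/exists_inP[e eE ye]|] := boolP [exists e in E, y t e != 0]; first by exists e.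
rewrite negb_exists_in => /forall_inP y0; have := outflow_probe_h0 S h0 tv.
have y_cyc : cycvec tl E (y t).
  by apply/cycvecP; split=> [e /y0/negPn/eqP //|]; apply: netflow_probe.
rewrite (outflow_vertex_eq0 h0v (netflow_probe _ _ tv _)) => [/eqP|t' t'v].
  by rewrite eq_sym oppr_eq0 oner_eq0.
apply: (no_step t'v y_cyc) => s sS; exact: (tflow_probe_S h0 S_sub vS tv sS).
Qed.

Lemma probe_E_uniq t t' e e' : trans_at v t -> trans_at v t' -> e \in E -> e' \in E ->
  y t e != 0 -> y t' e' != 0 -> e = e'.
Proof.
move=> tv t'v eE e'E ye ye'.
have [z ze vz] := probe_support tv h0v ye; have [z' z'e' vz'] := probe_support t'v h0v ye'.
by apply: (E_sep eE e'E ze z'e'); apply: (connect_trans _ vz'); rewrite adj_sym.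
Qed.

(* Cancelling the common edge [e0] of [E] between the probes of [t] and [t']
   gives a cycle of [F - E] annihilated by [S], on which [t'] vanishes. *)
Lemma tflow_probe_at t t' : trans_at v t -> trans_at v t' -> tflow tl o t' (y t) = 0.
Proof.
move=> tv t'v; have [e0 e0E ye0] := probe_meets_E tv.
have y_e0 u : trans_at v u -> y u e0 != 0.
  by move=> uv; have [e eE ye] := probe_meets_E uv; rewrite (probe_E_uniq tv uv e0E eE ye0 ye).
have y_off u e : trans_at v u -> e \in E -> e != e0 -> y u e = 0.
  by move=> uv eE; apply: contraNeq => ye; apply/eqP/(probe_E_uniq uv tv eE e0E ye ye0).
pose z := lincomb (y t' e0) (y t) (- y t e0) (y t').
have z_cyc : cycvec tl E z.
  apply/cycvecP; split=> [e eE|u]; last first.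
    by rewrite netflow_lincomb (netflow_probe _ _ tv) (netflow_probe _ _ t'v) !mulr0 addr0.
  rewrite /z /lincomb; have [->|ee0] := eqVneq e e0; first by rewrite mulNr mulrC subrr.
  by rewrite (y_off t e) ?(y_off t' e) // !mulr0 addr0.
have zS s : s \in S -> tflow tl o s z = 0.
  move=> sS; rewrite (tflow_lincomb tl_dir).
  by rewrite (tflow_probe_S h0 S_sub vS tv sS) (tflow_probe_S h0 S_sub vS t'v sS) !mulr0 addr0.
have := no_step t'v z_cyc zS.
rewrite (tflow_lincomb tl_dir) (tflow_probe h0 S_sub vS t'v (setU11 _ _)) mulr0 addr0.
by move/eqP; rewrite mulf_eq0 (negbTE (y_e0 t' t'v)) => /eqP.
Qed.

Lemma no_step_absurd : False.
Proof.
have [t tv] := trans_at_exists F4 v; have := outflow_probe_h0 S h0 tv.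
rewrite (outflow_vertex_eq0 h0v (netflow_probe _ _ tv _) (fun t' => tflow_probe_at tv)).
by move/eqP; rewrite eq_sym oppr_eq0 oner_eq0.
Qed.

End NoStep.

Lemma crank_step S v : subtransversal S -> ~~ covered S v ->
  exists2 t, trans_at v t & rk (t |: S) = (rk S).+1.
Proof.
move=> S_sub vS; have /card_gt0P[h0] : (0 < #|star v|)%N by rewrite (card_star F4).
rewrite in_star => /eqP h0v.
have [/existsP[t /andP[tv /eqP rk_t]]|no_t] :=
  boolP [exists t, trans_at v t && (rk (t |: S) == (rk S).+1)]; first by exists t.
case: (no_step_absurd S_sub vS h0v) => t x tv x_cyc xS; apply/eqP.
apply: contraNT no_t => xt; apply/existsP; exists t.
by rewrite tv (crankU1 tl_dir w_span x_cyc xS xt) eqxx.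
Qed.

End CrankStep.

Section MultimatroidRank.
Variable F : graph.
Hypothesis F4 : four_regular F.
Variable r : {set trans F} -> nat.
Hypothesis r_mm : multimatroid r.

Lemma multimatroid_le_card (S : {set trans F}) : subtransversal S -> r S <= #|S|.
Proof. by move=> S_sub; have [] := r_mm.1 S S_sub S S (subxx _) (subxx _). Qed.

Lemma multimatroid0 : r set0 = 0.
Proof.
by apply/eqP; rewrite -leqn0 -(cards0 (trans F)) multimatroid_le_card ?subtransversal0.
Qed.

Lemma multimatroid_mono (S T : {set trans F}) : subtransversal T -> S \subset T -> r S <= r T.
Proof. by move=> T_sub ST; have [_ -> //] := r_mm.1 T T_sub S T ST (subxx _). Qed.

Lemma multimatroidU1_le (S : {set trans F}) t : subtransversal (t |: S) -> r (t |: S) <= (r S).+1.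
Proof.
move=> tS_sub; have t_sub : [set t] \subset t |: S by rewrite sub1set setU11.
have [_ _] := r_mm.1 _ tS_sub S [set t] (subsetUr _ _) t_sub.
have [le_t _ _] := r_mm.1 _ tS_sub _ _ t_sub t_sub.
by rewrite cards1 setUC in le_t *; lia.
Qed.

Lemma multimatroid_step (S : {set trans F}) v : subtransversal S -> ~~ covered S v ->
  exists2 t, trans_at v t & r (t |: S) = (r S).+1.
Proof.
move=> S_sub vS; have [x xv] := trans_at_exists F4 v; have [y [yv yx]] := trans_at_other F4 xv.
have vS' t : t \in S -> ~~ trans_at v t.
  by move=> tS; apply: contra vS => tv; apply/existsP; exists t; rewrite tS.
have xS_sub := subtransversalU1 F4 S_sub vS xv; have yS_sub := subtransversalU1 F4 S_sub vS yv.
have [rx|rx] := eqVneq (r (x |: S)) (r S).+1; first by exists x.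
exists y => //; move: rx (r_mm.2 S v y x S_sub vS' yv xv yx).
move: (multimatroidU1_le xS_sub) (multimatroidU1_le yS_sub).
move: (multimatroid_mono xS_sub (subsetUr _ _)) (multimatroid_mono yS_sub (subsetUr _ _)).
by move: (r S) (r (x |: S)) (r (y |: S)) => a b c; lia.
Qed.

End MultimatroidRank.

Section Representation.
Variable F : graph.
Hypothesis F4 : four_regular F.
Local Notation V := (gV F).
Local Notation H := (gH F).
Variable tl : H -> bool.
Hypothesis tl_dir : directed tl.
Variable o : trans F -> {set H}.
Hypothesis o_trans : trans_orientation o.
Variables (E : {set edge F}) (I : finType) (w : I -> walk F).
Hypothesis E_sep : one_edge_per_component E.
Hypothesis w_span : cycle_spanning_set tl E w.
Variable r : {set trans F} -> nat.
Hypothesis r_Q : is_Q r.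
Local Notation rk := (crank (CMDelta tl o w)).

Lemma crank_transversal tr : (forall v, trans_at v (tr v)) ->
  (rk (tr_set tr) + #|V| + ncomp F = r (tr_set tr) + \rank (CM tl w) + #|E|)%N.
Proof.
move=> tr_at; have := r_Q.2 _ (circuit_partition_tr_circuits F4 tr_at).
rewrite (tau_tr_circuits F4 tr_at) size_tr_circuits (card_chosen F4 tr_at E_sep).
have := crank_ker tl o w (tr_set tr).
rewrite (rank_cyc_ker_tr F4 tl_dir o_trans w_span tr_at).
by move: (rk _) (r _) (\rank _) #|avoiding _ _| => a b c d; lia.
Qed.

Lemma rank_CM : (\rank (CM tl w) + #|E| = #|V| + ncomp F)%N.
Proof.
have unc0 : #|uncovered (set0 : {set trans F})| = #|V| by rewrite uncovered0 cardsT.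
have [T0 [T0_sub T0_cov rkT0]] :=
  greedy_transversal F4 (crank_step F4 tl_dir o_trans E_sep w_span) (subtransversal0 F).
have [T1 [T1_sub T1_cov rT1]] :=
  greedy_transversal F4 (multimatroid_step F4 r_Q.1) (subtransversal0 F).
rewrite unc0 in rkT0 rT1; rewrite (multimatroid0 r_Q.1) in rT1.
have rk0 : rk set0 = 0%N by apply/eqP; rewrite -leqn0 -(cards0 (trans F)) crank_le_card.
rewrite rk0 in rkT0.
have := crank_transversal (complete_at F4 T0); rewrite -transversal_complete //.
have := crank_transversal (complete_at F4 T1); rewrite -transversal_complete //.
have := multimatroid_le_card r_Q.1 T0_sub; have := crank_le_card tl o w T1.
have := card_subtransversal T0_sub; have := card_subtransversal T1_sub.
by move: rkT0 rT1; move: (rk T0) (rk T1) (r T0) (r T1) (\rank _) => a b c d e; lia.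
Qed.

Lemma crank_subtransversal S : subtransversal S -> rk S = r S.
Proof.
move: S; apply: (subtransversal_ind F4 (P := fun S => rk S = r S)).
  move=> S S_sub S_cov.
  have := crank_transversal (complete_at F4 S); rewrite -transversal_complete //.
  by have := rank_CM; move: (rk S) (r S) (\rank _) => a b c; lia.
move=> S v S_sub vS IH.
have [t1 t1v rk1] := crank_step F4 tl_dir o_trans E_sep w_span S_sub vS.
have [t2 t2v r2] := multimatroid_step F4 r_Q.1 S_sub vS.
have := multimatroidU1_le r_Q.1 (subtransversalU1 F4 S_sub vS t1v).
have := crankU1_le tl_dir o w_span S t2; have := IH t1 t1v; have := IH t2 t2v.
move: rk1 r2; move: (rk S) (r S) (rk (t1 |: S)) (r (t1 |: S)) (rk (t2 |: S)) (r (t2 |: S)).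
by move=> *; lia.
Qed.

Lemma crank_setT : #|E| = ncomp F -> rk setT = \max_(S | subtransversal S) r S.
Proof.
move=> E_ncomp; apply/eqP; rewrite eqn_leq; apply/andP; split.
  have [T [T_sub _ rT]] := greedy_transversal F4 (multimatroid_step F4 r_Q.1) (subtransversal0 F).
  rewrite (multimatroid0 r_Q.1) uncovered0 cardsT in rT.
  apply: leq_trans (leq_bigmax_cond _ T_sub); rewrite rT.
  by have := crank_le_rank tl o w setT; have := rank_CM; rewrite E_ncomp; lia.
apply/bigmax_leqP => S S_sub; rewrite -crank_subtransversal //.
exact: (crankS tl_dir o w_span (subsetT S)).
Qed.

End Representation.

Theorem mainTheorem10 (F : graph) (tl : gH F -> bool) (o : trans F -> {set gH F})
    (E : {set edge F}) (I : finType) (w : I -> walk F) :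
  four_regular F ->
  directed tl ->
  trans_orientation o ->
  (forall e1 e2 : edge F, e1 \in E -> e2 \in E ->
     forall h1 h2 : gH F, h1 \in val e1 -> h2 \in val e2 ->
       connect (@adj F) (eps h1) (eps h2) -> e1 = e2) ->
  cycle_spanning_set tl E w ->
  forall r : {set trans F} -> nat, is_Q r ->
    represents (CMDelta tl o w) r /\
    (#|E| = ncomp F -> strict_rep (CMDelta tl o w) r).
Proof.
move=> F4 tl_dir o_trans E_sep w_span r r_Q; split.
  exact: (crank_subtransversal F4 tl_dir o_trans E_sep w_span r_Q).
exact: (crank_setT F4 tl_dir o_trans E_sep w_span r_Q).
Qed.
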